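(* For $M,N\in\Lambda$, if $M\to_{\mathsf v}N$ then $\mathcal A(M)=\mathcal A(N)$.
   Context: $\lambda$-terms and values are $M,N::=V\mid MN$, $V::=x\mid\lambda x.M$, up to $\alpha$-conversion. Rules: $(\beta_v)$ $(\lambda x.M)V\to M\{x:=V\}$ if $V$ is a value; $(\sigma_1)$ $(\lambda x.M)NP\to(\lambda x.MP)N$ if $x\notin\mathrm{FV}(P)$; $(\sigma_3)$ $V((\lambda x.M)N)\to(\lambda x.VM)N$ if $V$ is a value and $x\notin\mathrm{FV}(V)$. $\to_{\mathsf v}$ is the contextual closure of their union and $\twoheadrightarrow_{\mathsf v}$ its reflexive-transitive closure. $\Lambda_\bot$ is the set of $\lambda$-terms possibly containing a constant $\bot$; $\sqsubseteq$ is the smallest context-closed preorder on $\Lambda_\bot$ with $\bot\sqsubseteq x$ and $\bot\sqsubseteq\lambda x.M$. Approximants $\mathcal A$ ($k\ge0$): $A::=B\mid C$; $B::=x\mid\lambda x.A\mid\bot\mid xBA_1\cdots A_k$; $C::=(\lambda x.A)(yBA_1\cdots A_k)$. $\mathcal A(M)=\{A\in\mathcal A\mid\exists N'\in\Lambda,\ M\twoheadrightarrow_{\mathsf v}N',\ A\sqsubseteq N'\}$. *)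

(* Lambda-terms with de Bruijn indices (alpha-conversion built in). *)
From Stdlib Require Import Arith Relations.

Inductive term : Type :=
| Var : nat -> term
| Lam : term -> term
| App : term -> term -> term
| Bot : term.

(* Lambda = the Bot-free terms. *)
Fixpoint pure (t : term) : Prop :=
  match t with
  | Var _ => True
  | Lam M => pure M
  | App M N => pure M /\ pure N
  | Bot => False
  end.

Definition is_value (t : term) : Prop :=
  match t with
  | Var _ | Lam _ => True
  | _ => False
  end.

Fixpoint shift (d c : nat) (t : term) : term :=
  match t with
  | Var i => if i <? c then Var i else Var (i + d)
  | Lam M => Lam (shift d (S c) M)
  | App M N => App (shift d c M) (shift d c N)
  | Bot => Bot
  end.

(* subst k u t : capture-avoiding substitution of u for index k in t
   (indices above k are decremented, since the binder is consumed). *)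
Fixpoint subst (k : nat) (u : term) (t : term) : term :=
  match t with
  | Var i => if i <? k then Var i
             else if i =? k then shift k 0 u
             else Var (i - 1)
  | Lam M => Lam (subst (S k) u M)
  | App M N => App (subst k u M) (subst k u N)
  | Bot => Bot
  end.

(* lifting a term under one new binder: since the bound variable is fresh,
   this encodes the side conditions x notin FV(P), x notin FV(V). *)
Definition lift1 (t : term) : term := shift 1 0 t.

Inductive step : term -> term -> Prop :=
| step_beta : forall M V, is_value V ->
    step (App (Lam M) V) (subst 0 V M)
| step_sigma1 : forall M N P,
    step (App (App (Lam M) N) P) (App (Lam (App M (lift1 P))) N)
| step_sigma3 : forall V M N, is_value V ->
    step (App V (App (Lam M) N)) (App (Lam (App (lift1 V) M)) N)
| step_lam : forall M M', step M M' -> step (Lam M) (Lam M')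
| step_appl : forall M M' N, step M M' -> step (App M N) (App M' N)
| step_appr : forall M N N', step N N' -> step (App M N) (App M N').

Definition steps : term -> term -> Prop := clos_refl_trans term step.

Inductive approx_le : term -> term -> Prop :=
| le_refl : forall M, approx_le M M
| le_trans : forall M N P, approx_le M N -> approx_le N P -> approx_le M P
| le_bot_var : forall x, approx_le Bot (Var x)
| le_bot_lam : forall M, approx_le Bot (Lam M)
| le_lam : forall M M', approx_le M M' -> approx_le (Lam M) (Lam M')
| le_appl : forall M M' N, approx_le M M' -> approx_le (App M N) (App M' N)
| le_appr : forall M N N', approx_le N N' -> approx_le (App M N) (App M N').

(* Approximants:
   A ::= B | C
   B ::= x | \x.A | Bot | x B A_1 ... A_k
   C ::= (\x.A) (y B A_1 ... A_k)
   is_spine t  <->  t = x B A_1 ... A_k  (k >= 0). *)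
Inductive is_A : term -> Prop :=
| A_B : forall t, is_B t -> is_A t
| A_C : forall t, is_C t -> is_A t
with is_B : term -> Prop :=
| B_var : forall x, is_B (Var x)
| B_lam : forall a, is_A a -> is_B (Lam a)
| B_bot : is_B Bot
| B_spine : forall t, is_spine t -> is_B t
with is_spine : term -> Prop :=
| spine_base : forall x b, is_B b -> is_spine (App (Var x) b)
| spine_app : forall s a, is_spine s -> is_A a -> is_spine (App s a)
with is_C : term -> Prop :=
| C_redex : forall a s, is_A a -> is_spine s -> is_C (App (Lam a) s).

Definition approximants (M : term) (A : term) : Prop :=
  is_A A /\ exists N', pure N' /\ steps M N' /\ approx_le A N'.

(* Reduction is confluent by the Hindley-Rosen lemma: beta_v is confluent via
   parallel reduction, the sigma rules are terminating and locally confluent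
   (Newman's lemma), and a beta_v step commutes with a sigma step.  Given
   M -> N and M ->> N' with A ⊑ N', confluence closes the peak by N' ->> P and
   N ->> P.  Reduction of N' preserves A ⊑ N': an approximant contains no redex,
   so every redex of a term above it lies inside a value that the approximant
   truncates to Bot. *)
From Stdlib Require Import Arith Lia Relations.

Local Notation star R := (clos_refl_trans _ R).

Lemma clos_rt_map {A : Type} {R : relation A} (f : A -> A) :
  (forall a b, R a b -> R (f a) (f b)) ->
  forall a b, star R a b -> star R (f a) (f b).
Proof.
  intros Hf a b H; induction H; eauto using rt_step, rt_refl, rt_trans.
Qed.

Section AbstractRewriting.

Context {A : Type}.
Implicit Types T R S P : relation A.

Definition diamond R := forall a b c, R a b -> R a c -> exists2 d, R b d & R c d.

Definition confluent R := diamond (star R).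

Definition commute R S :=
  forall a b c, star R a b -> star S a c -> exists2 d, star S b d & star R c d.

Lemma clos_rt_incl R S :
  (forall a b, R a b -> star S a b) -> forall a b, star R a b -> star S a b.
Proof.
  intros HRS a b H; induction H; eauto using rt_refl, rt_trans.
Qed.

Lemma diamond_strip R :
  diamond R -> forall a b c, R a b -> star R a c -> exists2 d, star R b d & R c d.
Proof.
  intros HR a b c Hab Hac; apply clos_rt_rt1n in Hac; revert b Hab.
  induction Hac as [a| a a' c Haa' _ IH]; intros b Hab.
  - exists b; auto using rt_refl.
  - destruct (HR _ _ _ Hab Haa') as [d Hbd Ha'd].
    destruct (IH _ Ha'd) as [e Hde Hce].
    exists e; [eapply rt_trans; [apply rt_step|]; eassumption | assumption].
Qed.

Lemma diamond_confluent R : diamond R -> confluent R.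
Proof.
  intros HR a b c Hab Hac; apply clos_rt_rt1n in Hab; revert c Hac.
  induction Hab as [a| a a' b Haa' _ IH]; intros c Hac.
  - exists c; auto using rt_refl.
  - destruct (diamond_strip R HR _ _ _ Haa' Hac) as [d Ha'd Hcd].
    destruct (IH _ Ha'd) as [e Hbe Hde].
    exists e; eauto using rt_trans, rt_step.
Qed.

Lemma confluent_of_diamond_between R P :
  (forall a b, R a b -> P a b) -> (forall a b, P a b -> star R a b) ->
  diamond P -> confluent R.
Proof.
  intros HRP HPR HP a b c Hab Hac.
  assert (HRP' : forall a b, star R a b -> star P a b)
    by (apply clos_rt_incl; auto using rt_step).
  destruct (diamond_confluent P HP a b c (HRP' _ _ Hab) (HRP' _ _ Hac)) as [d Hbd Hcd].
  exists d; apply (clos_rt_incl P R HPR); assumption.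
Qed.

Lemma newman_measure R (size : A -> nat) :
  (forall a b, R a b -> size b < size a) ->
  (forall a b c, R a b -> R a c -> exists2 d, star R b d & star R c d) ->
  confluent R.
Proof.
  intros Hdec Hlocal.
  enough (H : forall n a, size a < n -> forall b c, star R a b -> star R a c ->
                exists2 d, star R b d & star R c d)
    by (intros a b c; apply (H (S (size a))); lia).
  induction n as [|n IH]; intros a Ha b c Hab Hac; [lia|].
  apply clos_rt_rt1n in Hab; apply clos_rt_rt1n in Hac.
  destruct Hab as [|b1 b Hab1 Hb1]; [exists c; auto using clos_rt1n_rt, rt_refl|].
  destruct Hac as [|c1 c Hac1 Hc1].
  { exists b; [apply rt_refl|]. apply clos_rt1n_rt; econstructor; eauto. }
  apply clos_rt1n_rt in Hb1; apply clos_rt1n_rt in Hc1.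
  pose proof (Hdec _ _ Hab1); pose proof (Hdec _ _ Hac1).
  destruct (Hlocal _ _ _ Hab1 Hac1) as [d Hb1d Hc1d].
  destruct (IH b1 ltac:(lia) _ _ Hb1 Hb1d) as [e Hbe Hde].
  destruct (IH c1 ltac:(lia) _ _ Hc1 (rt_trans _ _ _ _ _ Hc1d Hde)) as [f Hcf Hef].
  exists f; eauto using rt_trans.
Qed.

Lemma commute_of_local R S :
  (forall a b c, R a b -> S a c -> exists2 d, star S b d & clos_refl _ R c d) ->
  commute R S.
Proof.
  intros Hloc.
  assert (Hone : forall a b c, R a b -> star S a c ->
                   exists2 d, star S b d & clos_refl _ R c d).
  { intros a b c Hab Hac; apply clos_rt_rt1n in Hac; revert b Hab.
    induction Hac as [a| a a' c Haa' Ha'c IH]; intros b Hab.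
    - exists b; auto using rt_refl, r_step.
    - destruct (Hloc _ _ _ Hab Haa') as [d Hbd Ha'd]; revert Hbd.
      destruct Ha'd as [d Ha'd|]; intros Hbd.
      + destruct (IH _ Ha'd) as [e Hde Hce].
        exists e; [eapply rt_trans|]; eassumption.
      + exists c; [| apply r_refl].
        eapply rt_trans; [eassumption | apply clos_rt1n_rt; assumption]. }
  intros a b c Hab; apply clos_rt_rt1n in Hab; revert c.
  induction Hab as [a| a a' b Haa' _ IH]; intros c Hac.
  - exists c; auto using rt_refl.
  - destruct (Hone _ _ _ Haa' Hac) as [d Ha'd Hcd].
    destruct (IH _ Ha'd) as [e Hbe Hde].
    exists e; [assumption|].
    destruct Hcd; eauto using rt_trans, rt_step.
Qed.

Lemma hindley_rosen T R S :
  (forall a b, T a b <-> R a b \/ S a b) ->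
  confluent R -> confluent S -> commute R S -> confluent T.
Proof.
  intros HT HR HS HRS.
  apply (confluent_of_diamond_between _ (union _ (star R) (star S))).
  - intros a b [H|H]%HT; [left|right]; apply rt_step; assumption.
  - intros a b [H|H]; eapply clos_rt_incl; try eassumption;
      intros; apply rt_step, HT; [left|right]; assumption.
  - intros a b c [Hb|Hb] [Hc|Hc].
    + destruct (HR _ _ _ Hb Hc) as [d]; exists d; left; assumption.
    + destruct (HRS _ _ _ Hb Hc) as [d]; exists d; [right|left]; assumption.
    + destruct (HRS _ _ _ Hc Hb) as [d]; exists d; [left|right]; assumption.
    + destruct (HS _ _ _ Hb Hc) as [d]; exists d; right; assumption.
Qed.

End AbstractRewriting.

Ltac destruct_index_tests := repeat (simpl; match goal with
  | |- context [?a <? ?b] => destruct (Nat.ltb_spec a b)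
  | |- context [?a =? ?b] => destruct (Nat.eqb_spec a b)
  end); simpl.

Lemma shift_0 t c : shift 0 c t = t.
Proof.
  revert c; induction t; intros c; simpl; f_equal; auto.
  destruct (n <? c); f_equal; lia.
Qed.

Lemma shift_shift t d d' c c' : c' <= c -> c <= c' + d' ->
  shift d c (shift d' c' t) = shift (d + d') c' t.
Proof.
  revert c c'; induction t; intros c c' H1 H2; simpl.
  - destruct_index_tests; f_equal; lia.
  - f_equal; apply IHt; lia.
  - f_equal; auto.
  - reflexivity.
Qed.

Lemma shift_shift_comm t d d' c c' : c' <= c ->
  shift d' c' (shift d c t) = shift d (c + d') (shift d' c' t).
Proof.
  revert c c'; induction t; intros c c' H; simpl.
  - destruct_index_tests; f_equal; lia.
  - f_equal; rewrite IHt by lia; reflexivity.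
  - f_equal; auto.
  - reflexivity.
Qed.

Lemma shift_subst t u d c k : k <= c ->
  shift d c (subst k u t) = subst k (shift d (c - k) u) (shift d (S c) t).
Proof.
  revert c k; induction t; intros c k H; simpl.
  - destruct_index_tests; try (f_equal; lia); try lia.
    subst; rewrite (shift_shift_comm u d k (c - k) 0) by lia; f_equal; lia.
  - f_equal; rewrite IHt by lia; reflexivity.
  - f_equal; auto.
  - reflexivity.
Qed.

Lemma subst_shift_absorb t u d c k : c <= k -> k <= c + d ->
  subst k u (shift (S d) c t) = shift d c t.
Proof.
  revert c k; induction t; intros c k H1 H2; simpl.
  - destruct_index_tests; f_equal; lia.
  - f_equal; apply IHt; lia.
  - f_equal; auto.
  - reflexivity.
Qed.

Lemma subst_shift t u j c k : c <= k ->
  subst (k + j) u (shift j c t) = shift j c (subst k u t).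
Proof.
  revert c k; induction t; intros c k H; simpl.
  - destruct_index_tests; try (f_equal; lia); try lia.
    subst; rewrite shift_shift by lia; f_equal; lia.
  - f_equal; replace (S (k + j)) with (S k + j) by lia; apply IHt; lia.
  - f_equal; auto.
  - reflexivity.
Qed.

Lemma subst_subst t u v j k : j <= k ->
  subst k u (subst j v t) = subst j (subst (k - j) u v) (subst (S k) u t).
Proof.
  revert j k; induction t; intros j k H; simpl.
  - destruct_index_tests; try (f_equal; lia); try lia.
    + replace k with (k - j + j) at 1 by lia; apply subst_shift; lia.
    + rewrite subst_shift_absorb by lia; reflexivity.
  - f_equal; rewrite IHt by lia; reflexivity.
  - f_equal; auto.
  - reflexivity.
Qed.

Lemma lift1_shift t d c : lift1 (shift d c t) = shift d (S c) (lift1 t).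
Proof. unfold lift1; rewrite shift_shift_comm by lia; f_equal; lia. Qed.

Lemma lift1_subst t u k : lift1 (subst k u t) = subst (S k) u (lift1 t).
Proof. unfold lift1; replace (S k) with (k + 1) by lia; rewrite subst_shift by lia; reflexivity. Qed.

Lemma subst_lift1 t u : subst 0 u (lift1 t) = t.
Proof. unfold lift1; rewrite subst_shift_absorb by lia; apply shift_0. Qed.

Lemma shift_value t d c : is_value t -> is_value (shift d c t).
Proof. destruct t; simpl; try tauto; destruct (n <? c); simpl; tauto. Qed.

Lemma subst_value t u k : is_value t -> is_value u -> is_value (subst k u t).
Proof.
  destruct t; simpl; try tauto; intros _ Hu.
  destruct (n <? k); [exact I|]; destruct (n =? k); [apply shift_value; assumption|exact I].
Qed.

Lemma shift_pure t d c : pure t -> pure (shift d c t).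
Proof. revert c; induction t; simpl; intuition. destruct (n <? c); exact I. Qed.

Lemma subst_pure t u k : pure t -> pure u -> pure (subst k u t).
Proof.
  revert k; induction t; simpl; intuition.
  destruct (n <? k); [exact I|]; destruct (n =? k); [apply shift_pure; assumption|exact I].
Qed.

Inductive beta_step : term -> term -> Prop :=
| beta_root : forall M V, is_value V -> beta_step (App (Lam M) V) (subst 0 V M)
| beta_lam : forall M M', beta_step M M' -> beta_step (Lam M) (Lam M')
| beta_appl : forall M M' N, beta_step M M' -> beta_step (App M N) (App M' N)
| beta_appr : forall M N N', beta_step N N' -> beta_step (App M N) (App M N').

Inductive sigma_step : term -> term -> Prop :=
| sigma1_root : forall M N P,
    sigma_step (App (App (Lam M) N) P) (App (Lam (App M (lift1 P))) N)
| sigma3_root : forall V M N, is_value V ->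
    sigma_step (App V (App (Lam M) N)) (App (Lam (App (lift1 V) M)) N)
| sigma_lam : forall M M', sigma_step M M' -> sigma_step (Lam M) (Lam M')
| sigma_appl : forall M M' N, sigma_step M M' -> sigma_step (App M N) (App M' N)
| sigma_appr : forall M N N', sigma_step N N' -> sigma_step (App M N) (App M N').

Lemma step_iff_beta_or_sigma M N : step M N <-> beta_step M N \/ sigma_step M N.
Proof.
  split.
  - induction 1 as [| | | ? ? _ [IH|IH] | ? ? ? _ [IH|IH] | ? ? ? _ [IH|IH]];
      solve [left; constructor; assumption | right; constructor; assumption].
  - intros [H|H]; induction H; constructor; assumption.
Qed.

Lemma step_pure M N : step M N -> pure M -> pure N.
Proof.
  induction 1; simpl; unfold lift1; intuition auto using subst_pure, shift_pure.
Qed.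

Lemma steps_pure M N : steps M N -> pure M -> pure N.
Proof. induction 1; eauto using step_pure. Qed.

Lemma step_value V V' : step V V' -> is_value V -> is_value V'.
Proof. destruct 1; simpl; tauto. Qed.

Lemma beta_step_value V V' : beta_step V V' -> is_value V -> is_value V'.
Proof. destruct 1; simpl; tauto. Qed.

Lemma sigma_step_value V V' : sigma_step V V' -> is_value V -> is_value V'.
Proof. destruct 1; simpl; tauto. Qed.

Lemma beta_step_shift M N d c : beta_step M N -> beta_step (shift d c M) (shift d c N).
Proof.
  intros H; revert c; induction H; intros c; simpl; try (constructor; auto; fail).
  rewrite shift_subst, Nat.sub_0_r by lia; constructor; apply shift_value; assumption.
Qed.

Lemma sigma_step_shift M N d c : sigma_step M N -> sigma_step (shift d c M) (shift d c N).
Proof.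
  intros H; revert c; induction H; intros c; simpl; try (constructor; auto; fail).
  - rewrite <- lift1_shift; constructor.
  - rewrite <- lift1_shift; constructor; apply shift_value; assumption.
Qed.

Lemma sigma_step_subst M N k u :
  sigma_step M N -> is_value u -> sigma_step (subst k u M) (subst k u N).
Proof.
  intros H Hu; revert k; induction H; intros k; simpl; try (constructor; auto; fail).
  - rewrite <- lift1_subst; constructor.
  - rewrite <- lift1_subst; constructor; apply subst_value; assumption.
Qed.

Lemma sigma_steps_subst_arg t u u' k :
  sigma_step u u' -> star sigma_step (subst k u t) (subst k u' t).
Proof.
  intros H; revert k; induction t; intros k; simpl.
  - destruct (n <? k); [apply rt_refl|]; destruct (n =? k); [|apply rt_refl].
    apply rt_step, sigma_step_shift; assumption.
  - apply (clos_rt_map Lam); auto using sigma_lam.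
  - eapply rt_trans.
    + apply (clos_rt_map (fun x => App x (subst k u t2))); auto using sigma_appl.
    + apply (clos_rt_map (fun x => App (subst k u' t1) x)); auto using sigma_appr.
  - apply rt_refl.
Qed.

Inductive par_beta : term -> term -> Prop :=
| par_var : forall i, par_beta (Var i) (Var i)
| par_bot : par_beta Bot Bot
| par_lam : forall M M', par_beta M M' -> par_beta (Lam M) (Lam M')
| par_app : forall M M' N N', par_beta M M' -> par_beta N N' ->
    par_beta (App M N) (App M' N')
| par_root : forall M M' V V', is_value V -> par_beta M M' -> par_beta V V' ->
    par_beta (App (Lam M) V) (subst 0 V' M').

Lemma par_beta_refl t : par_beta t t.
Proof. induction t; constructor; assumption. Qed.

Lemma par_beta_value V V' : par_beta V V' -> is_value V -> is_value V'.
Proof. destruct 1; simpl; tauto. Qed.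

Lemma par_beta_shift M M' d c : par_beta M M' -> par_beta (shift d c M) (shift d c M').
Proof.
  intros H; revert c; induction H; intros c; simpl; try (constructor; auto; fail).
  - destruct (i <? c); constructor.
  - rewrite shift_subst, Nat.sub_0_r by lia.
    constructor; auto using shift_value.
Qed.

Lemma par_beta_subst M M' V V' k : par_beta M M' -> par_beta V V' -> is_value V ->
  par_beta (subst k V M) (subst k V' M').
Proof.
  intros H HV HVv; revert k; induction H; intros k; simpl; try (constructor; auto; fail).
  - destruct (i <? k); [constructor|].
    destruct (i =? k); [apply par_beta_shift; assumption | constructor].
  - rewrite subst_subst, Nat.sub_0_r by lia.
    constructor; auto using subst_value.
Qed.

Lemma par_beta_diamond : diamond par_beta.
Proof.
  intros a b c Hab; revert c; induction Hab as
    [i| |M M' _ IH|M M' N N' HM IHM HN IHN|M M' V V' Hv HM IHM HV IHV]; intros c Hac.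
  - inversion Hac; subst; exists (Var i); constructor.
  - inversion Hac; subst; exists Bot; constructor.
  - inversion Hac as [| |? M'' HM''| |]; subst.
    destruct (IH _ HM'') as [d]; exists (Lam d); constructor; assumption.
  - inversion Hac as [| |? ? Hx|? ? ? ? HMc HNc|K K' W W' Hv HK HW]; subst.
    + destruct (IHM _ HMc) as [d]; destruct (IHN _ HNc) as [e].
      exists (App d e); constructor; assumption.
    + inversion HM as [| |? K1 HK1| |]; subst.
      destruct (IHM (Lam K')) as [d Hd1 Hd2]; [constructor; assumption|].
      inversion Hd1 as [| |? Q HQ1| |]; subst; inversion Hd2 as [| |? ? HQ2| |]; subst.
      destruct (IHN _ HW) as [e].
      exists (subst 0 e Q).
      * constructor; eauto using par_beta_value.
      * apply par_beta_subst; eauto using par_beta_value.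
  - inversion Hac as [| |? ? Hx|? ? ? ? HMc HNc|K K' W W' Hv' HK HW]; subst.
    + inversion HMc as [| |? K' HK'| |]; subst.
      destruct (IHM _ HK') as [d]; destruct (IHV _ HNc) as [e].
      exists (subst 0 e d).
      * apply par_beta_subst; eauto using par_beta_value.
      * constructor; eauto using par_beta_value.
    + destruct (IHM _ HK) as [d]; destruct (IHV _ HW) as [e].
      exists (subst 0 e d); apply par_beta_subst; eauto using par_beta_value.
Qed.

Lemma par_beta_steps M M' : par_beta M M' -> star beta_step M M'.
Proof.
  induction 1; try apply rt_refl.
  - apply (clos_rt_map Lam); auto using beta_lam.
  - apply rt_trans with (App M' N).
    + apply (clos_rt_map (fun x => App x N)); auto using beta_appl.
    + apply (clos_rt_map (fun x => App M' x)); auto using beta_appr.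
  - apply rt_trans with (App (Lam M') V); [|apply rt_trans with (App (Lam M') V')].
    + apply (clos_rt_map (fun x => App (Lam x) V)); auto using beta_appl, beta_lam.
    + apply (clos_rt_map (fun x => App (Lam M') x)); auto using beta_appr.
    + apply rt_step; constructor; eauto using par_beta_value.
Qed.

Lemma beta_confluent : confluent beta_step.
Proof.
  apply (confluent_of_diamond_between _ par_beta); auto using par_beta_steps, par_beta_diamond.
  induction 1; constructor; auto using par_beta_refl.
Qed.

Fixpoint sigma_size (t : term) : nat :=
  match t with
  | Var _ | Bot => 2
  | Lam M => S (sigma_size M)
  | App M N => sigma_size M * sigma_size N
  end.

Lemma sigma_size_ge2 t : 2 <= sigma_size t.
Proof. induction t; simpl; nia. Qed.

Lemma sigma_size_shift t d c : sigma_size (shift d c t) = sigma_size t.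
Proof. revert c; induction t; intros c; simpl; auto. destruct (n <? c); reflexivity. Qed.

(* With sizes m, n, p >= 2, sigma1 maps (m+1)np to (mp+1)n and sigma3 maps
   p(m+1)n to (pm+1)n. *)
Lemma sigma_step_size M N : sigma_step M N -> sigma_size N < sigma_size M.
Proof.
  induction 1; simpl; unfold lift1; rewrite ?sigma_size_shift.
  - pose proof (sigma_size_ge2 N); pose proof (sigma_size_ge2 P); nia.
  - pose proof (sigma_size_ge2 V); pose proof (sigma_size_ge2 N); nia.
  - lia.
  - pose proof (sigma_size_ge2 N); nia.
  - pose proof (sigma_size_ge2 M); nia.
Qed.

Definition sigma_joinable M N :=
  exists2 P, star sigma_step M P & star sigma_step N P.

Lemma sigma_joinable_sym M N : sigma_joinable M N -> sigma_joinable N M.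
Proof. intros [P]; exists P; assumption. Qed.

Lemma sigma_joinable_steps M N P :
  sigma_step M P -> sigma_step N P -> sigma_joinable M N.
Proof. exists P; apply rt_step; assumption. Qed.

Lemma sigma_joinable_ctx (f : term -> term) M N :
  (forall a b, sigma_step a b -> sigma_step (f a) (f b)) ->
  sigma_joinable M N -> sigma_joinable (f M) (f N).
Proof. intros Hf [P]; exists (f P); apply (clos_rt_map f); assumption. Qed.

Lemma sigma1_critical M N P X : sigma_step (App (App (Lam M) N) P) X ->
  sigma_joinable (App (Lam (App M (lift1 P))) N) X.
Proof.
  intros H; inversion H as [| ? ? ? Hv | | ? M' ? HM' | ? ? P' HP']; subst.
  - eexists; apply rt_refl.
  - contradiction.
  - inversion HM' as [| ? M0 N0 _ | | ? ? ? HL | ? ? ? HN ]; subst.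
    + (* the σ1 / σ3 overlap on (λx.M) ((λy.M0) N0) P *)
      exists (App (Lam (App (Lam (App (shift 1 1 M) (lift1 (lift1 P)))) M0)) N0).
      * eapply rt_trans; [apply rt_step, sigma3_root; exact I|].
        unfold lift1; simpl; rewrite !shift_shift by lia; apply rt_refl.
      * eapply rt_trans; [apply rt_step, sigma1_root|].
        apply rt_step, sigma_appl, sigma_lam. unfold lift1 at 2; simpl; apply sigma1_root.
    + inversion HL as [| | ? M1 HM1 | |]; subst.
      apply sigma_joinable_steps with (App (Lam (App M1 (lift1 P))) N).
      * do 3 constructor; assumption.
      * constructor.
    + apply sigma_joinable_steps with (App (Lam (App M (lift1 P))) N').
      * constructor; assumption.
      * constructor.
  - apply sigma_joinable_steps with (App (Lam (App M (lift1 P'))) N).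
    + do 3 constructor; apply sigma_step_shift; assumption.
    + constructor.
Qed.

Lemma sigma3_critical V M N X : is_value V -> sigma_step (App V (App (Lam M) N)) X ->
  sigma_joinable (App (Lam (App (lift1 V) M)) N) X.
Proof.
  intros Hv H; inversion H as [| | | ? V' ? HV' | ? ? R' HR']; subst.
  - contradiction.
  - eexists; apply rt_refl.
  - apply sigma_joinable_steps with (App (Lam (App (lift1 V') M)) N).
    + do 3 constructor; apply sigma_step_shift; assumption.
    + constructor; eauto using sigma_step_value.
  - inversion HR' as [| ? M0 N0 _ | | ? ? ? HL | ? ? ? HN ]; subst.
    + (* the σ3 / σ3 overlap on V ((λx.M) ((λy.M0) N0)) *)
      exists (App (Lam (App (Lam (App (lift1 (lift1 V)) (shift 1 1 M))) M0)) N0).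
      * eapply rt_trans; [apply rt_step, sigma3_root; exact I|].
        unfold lift1; simpl; rewrite !shift_shift by lia; apply rt_refl.
      * eapply rt_trans; [apply rt_step, sigma3_root; assumption|].
        apply rt_step, sigma_appl, sigma_lam. unfold lift1 at 2; simpl.
        apply sigma3_root, shift_value; assumption.
    + inversion HL as [| | ? M1 HM1 | |]; subst.
      apply sigma_joinable_steps with (App (Lam (App (lift1 V) M1)) N).
      * do 3 constructor; assumption.
      * constructor; assumption.
    + apply sigma_joinable_steps with (App (Lam (App (lift1 V) M)) N').
      * constructor; assumption.
      * constructor; assumption.
Qed.

Lemma sigma_local_confluent M N N' :
  sigma_step M N -> sigma_step M N' -> sigma_joinable N N'.
Proof.
  intros H; revert N'; induction H; intros N'' H'.
  - apply sigma1_critical; assumption.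
  - apply sigma3_critical; assumption.
  - inversion H'; subst; apply (sigma_joinable_ctx Lam); auto using sigma_lam.
  - inversion H'; subst.
    + apply sigma_joinable_sym, sigma1_critical; constructor; assumption.
    + apply sigma_joinable_sym, sigma3_critical; [|constructor]; assumption.
    + apply (sigma_joinable_ctx (fun x => App x N)); auto using sigma_appl.
    + apply sigma_joinable_steps with (App M' N'); constructor; assumption.
  - inversion H'; subst.
    + apply sigma_joinable_sym, sigma1_critical; constructor; assumption.
    + apply sigma_joinable_sym, sigma3_critical; [|constructor]; assumption.
    + apply sigma_joinable_steps with (App M' N'); constructor; assumption.
    + apply (sigma_joinable_ctx (fun x => App M x)); auto using sigma_appr.
Qed.

Lemma sigma_confluent : confluent sigma_step.
Proof.
  exact (newman_measure _ sigma_size sigma_step_size sigma_local_confluent).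
Qed.

Lemma beta_sigma_local_commute M L N : beta_step M L -> sigma_step M N ->
  exists2 P, star sigma_step L P & clos_refl _ beta_step N P.
Proof.
  intros H; revert N; induction H as [M V Hv|M M' H IH|M M' Q H IH|M Q Q' H IH];
    intros X HX.
  - inversion HX as [| | | ? ? ? HM | ? ? V' HV]; subst.
    + contradiction.
    + inversion HM as [| | ? M1 HM1 | |]; subst.
      eexists; [apply rt_step, sigma_step_subst; eassumption|].
      apply r_step; constructor; assumption.
    + eexists; [apply sigma_steps_subst_arg; eassumption|].
      apply r_step; constructor; eauto using sigma_step_value.
  - inversion HX as [| | ? M'' HM'' | |]; subst.
    destruct (IH _ HM'') as [P HP1 HP2].
    exists (Lam P); [apply (clos_rt_map Lam); auto using sigma_lam|].
    destruct HP2; constructor; constructor; assumption.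
  - inversion HX as [K N0 ? | ? K N0 Hv | | ? M'' ? HM'' | ? ? Q'' HQ'']; subst.
    + inversion H as [? ? Hv | | ? K' ? HK | ? ? N0' HN0]; subst.
      * exists (App (subst 0 N0 K) Q); [apply rt_refl|].
        apply r_step; rewrite <- (subst_lift1 Q N0) at 2; constructor; assumption.
      * inversion HK as [| ? K1 HK1 | | ]; subst.
        eexists; [apply rt_step, sigma1_root|].
        apply r_step; do 3 constructor; assumption.
      * eexists; [apply rt_step, sigma1_root|].
        apply r_step; constructor; assumption.
    + eexists; [apply rt_step, sigma3_root; eauto using beta_step_value|].
      apply r_step; do 3 constructor; apply beta_step_shift; assumption.
    + destruct (IH _ HM'') as [P HP1 HP2].
      exists (App P Q); [apply (clos_rt_map (fun x => App x Q)); auto using sigma_appl|].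
      destruct HP2; constructor; constructor; assumption.
    + eexists; [apply rt_step, sigma_appr; eassumption|].
      apply r_step; constructor; assumption.
  - inversion HX as [K N0 ? | ? K N0 Hv | | ? M' ? HM' | ? ? Q'' HQ'']; subst.
    + eexists; [apply rt_step, sigma1_root|].
      apply r_step; do 3 constructor; apply beta_step_shift; assumption.
    + inversion H as [? ? Hv' | | ? K' ? HK | ? ? N0' HN0]; subst.
      * exists (App M (subst 0 N0 K)); [apply rt_refl|].
        apply r_step; rewrite <- (subst_lift1 M N0) at 2; constructor; assumption.
      * inversion HK as [| ? K1 HK1 | | ]; subst.
        eexists; [apply rt_step, sigma3_root; assumption|].
        apply r_step; do 3 constructor; assumption.
      * eexists; [apply rt_step, sigma3_root; assumption|].
        apply r_step; constructor; assumption.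
    + eexists; [apply rt_step, sigma_appl; eassumption|].
      apply r_step; constructor; assumption.
    + destruct (IH _ HQ'') as [P HP1 HP2].
      exists (App M P); [apply (clos_rt_map (fun x => App M x)); auto using sigma_appr|].
      destruct HP2; constructor; constructor; assumption.
Qed.

Lemma step_confluent : confluent step.
Proof.
  apply (hindley_rosen _ beta_step sigma_step step_iff_beta_or_sigma beta_confluent
           sigma_confluent).
  apply commute_of_local; exact beta_sigma_local_commute.
Qed.

Inductive bot_prefix : term -> term -> Prop :=
| prefix_bot : bot_prefix Bot Bot
| prefix_bot_value : forall V, is_value V -> bot_prefix Bot V
| prefix_var : forall i, bot_prefix (Var i) (Var i)
| prefix_lam : forall M M', bot_prefix M M' -> bot_prefix (Lam M) (Lam M')
| prefix_app : forall M M' N N', bot_prefix M M' -> bot_prefix N N' ->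
    bot_prefix (App M N) (App M' N').

Lemma bot_prefix_refl t : bot_prefix t t.
Proof. induction t; constructor; assumption. Qed.

Lemma bot_prefix_value M N : bot_prefix M N -> is_value M -> is_value N.
Proof. destruct 1; simpl; tauto. Qed.

Lemma bot_prefix_trans M N P : bot_prefix M N -> bot_prefix N P -> bot_prefix M P.
Proof.
  intros H; revert P; induction H; intros P HP.
  - assumption.
  - constructor; eauto using bot_prefix_value.
  - assumption.
  - inversion HP; subst; constructor; auto.
  - inversion HP; subst; constructor; auto.
Qed.

Lemma approx_le_iff_bot_prefix M N : approx_le M N <-> bot_prefix M N.
Proof.
  split; induction 1; eauto using bot_prefix_refl, bot_prefix_trans, bot_prefix.
  - constructor; exact I.
  - constructor; exact I.
  - apply le_refl.
  - destruct V; try contradiction; constructor.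
  - apply le_refl.
  - apply le_lam; assumption.
  - eapply le_trans; [apply le_appl | apply le_appr]; eassumption.
Qed.

Fixpoint var_headed (t : term) : Prop :=
  match t with
  | Var _ => True
  | App M _ => var_headed M
  | _ => False
  end.

Lemma spine_prefix_shape s N : is_spine s -> bot_prefix s N ->
  exists N1 N2, N = App N1 N2 /\ var_headed N1.
Proof.
  intros Hs; revert N; induction Hs as [x b _|s a _ IH _]; intros N HN;
    inversion HN as [| | | |? N1 ? N2 H1 _]; subst.
  - inversion H1; subst; exists (Var x), N2; split; [reflexivity | exact I].
  - destruct (IH _ H1) as (N3 & N4 & -> & Hhead).
    exists (App N3 N4), N2; split; [reflexivity | exact Hhead].
Qed.

Lemma B_prefix_not_redex b N M V : is_B b -> bot_prefix b N -> N <> App (Lam M) V.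
Proof.
  intros Hb HN ->; destruct Hb as [|? _| |s Hs].
  - inversion HN.
  - inversion HN.
  - inversion HN; contradiction.
  - destruct (spine_prefix_shape s _ Hs HN) as (N1 & N2 & [= <- _] & Hhead).
    exact Hhead.
Qed.

Scheme is_A_mutind := Minimality for is_A Sort Prop
with is_B_mutind := Minimality for is_B Sort Prop
with is_spine_mutind := Minimality for is_spine Sort Prop
with is_C_mutind := Minimality for is_C Sort Prop.

Definition prefix_stable (t : term) :=
  forall N N', bot_prefix t N -> step N N' -> bot_prefix t N'.

Lemma approximant_prefix_stable t : is_A t -> prefix_stable t.
Proof.
  apply (is_A_mutind prefix_stable prefix_stable prefix_stable prefix_stable);
    unfold prefix_stable; try tauto.
  - intros x N N' HN Hstep; inversion HN; subst; inversion Hstep.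
  - intros a _ IH N N' HN Hstep; inversion HN; subst.
    inversion Hstep; subst; constructor; eauto.
  - intros N N' HN Hstep; inversion HN; subst.
    + inversion Hstep.
    + constructor; eauto using bot_prefix_value, step_value.
  - intros x b Hb IH N N' HN Hstep.
    inversion HN as [| | | |? N1 ? N2 H1 H2]; subst; inversion H1; subst.
    inversion Hstep; subst.
    + exfalso; eapply B_prefix_not_redex; eauto.
    + match goal with Hs : step (Var _) _ |- _ => inversion Hs end.
    + constructor; eauto.
  - intros s a Hs IHs Ha IHa N N' HN Hstep.
    inversion HN as [| | | |? N1 ? N2 H1 H2]; subst.
    destruct (spine_prefix_shape _ _ Hs H1) as (N3 & N4 & -> & Hhead).
    inversion Hstep; subst; simpl in *; try contradiction; constructor; eauto.
  - intros a s Ha IHa Hs IHs N N' HN Hstep.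
    inversion HN as [| | | |? N1 ? N2 H1 H2]; subst; inversion H1; subst.
    destruct (spine_prefix_shape _ _ Hs H2) as (N3 & N4 & -> & Hhead).
    inversion Hstep as [| | | |? ? ? Hl|? ? ? Hr]; subst; simpl in *; try contradiction.
    + inversion Hl; subst; constructor; [constructor|]; eauto.
    + constructor; eauto.
Qed.

Lemma approximant_prefix_steps t N N' :
  is_A t -> bot_prefix t N -> steps N N' -> bot_prefix t N'.
Proof.
  intros Ht HN Hsteps; revert HN.
  induction Hsteps; auto.
  intros HN; apply (approximant_prefix_stable t Ht x); assumption.
Qed.

Theorem lemma2p6 : forall M N : term, pure M -> pure N -> step M N ->
  forall A : term, approximants M A <-> approximants N A.
Proof.
  intros M N _ _ Hstep A; unfold approximants; split.
  - intros [HA [M' [HM' [HMM' HAM']]]]; split; [assumption|].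
    destruct (step_confluent M N M' (rt_step _ _ _ _ Hstep) HMM') as [P HNP HM'P].
    exists P; split; [eapply steps_pure; eassumption|]; split; [assumption|].
    apply approx_le_iff_bot_prefix in HAM'; apply approx_le_iff_bot_prefix.
    eapply approximant_prefix_steps; eassumption.
  - intros [HA [N' [HN' [HNN' HAN']]]]; split; [assumption|].
    exists N'; split; [assumption|]; split; [|assumption].
    eapply rt_trans; [apply rt_step|]; eassumption.
Qed.
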